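(* Let $\mathcal{A}$ be a CA of radius $r$ over alphabet $Q$ and $\mu$ a complete Bernoulli measure on $Q^{\mathbb{Z}}$. Then for any word $w\in Q^*$ and any persistent word $u\in L_\mu(\mathcal{A})$ there exist positive integers $k_1,k_2$ and a strictly increasing sequence of positive integers $(n_j)_{j\ge0}$ such that for all $j\ge0$, $$\mathcal{A}^{-n_j}(u)\cap\Big(Q^{rn_j-k_1-|w|}\cdot\{w\}\cdot Q^{k_1+k_2+|u|}\cdot\{w\}\cdot Q^{rn_j-k_2-|w|}\Big)\neq\emptyset .$$
   Context: A one-dimensional cellular automaton (CA) $\mathcal{A}$ is given by a finite alphabet $Q$, a radius $r\ge 0$ and a local rule $\delta:Q^{2r+1}\to Q$; it acts on configurations $c\in Q^{\mathbb{Z}}$ by $\mathcal{A}(c)_i=\delta(c_{i-r},\dots,c_{i+r})$. The local rule also maps any word $v$ of length $m\ge 2r+1$ to the word of length $m-2r$ obtained by applying $\delta$ to each window of length $2r+1$; for a word $u$ and $n\ge0$, $\mathcal{A}^{-n}(u)$ denotes the set of words $v$ of length $|u|+2rn$ whose image under $n$ such applications is $u$. For $u\in Q^*$, $i\in\mathbb{Z}$, $[u]_i=\{c\in Q^{\mathbb{Z}}: c_i\cdots c_{i+|u|-1}=u\}$. A Bernoulli measure $\mu$ on $Q^{\mathbb{Z}}$ is given by a probability vector $(p_a)_{a\in Q}$ with $\mu([u]_i)=\prod_{a\in Q}p_a^{|u|_a}$, where $|u|_a$ is the number of occurrences of $a$ in $u$; it is complete if $p_a>0$ for all $a$. $\mathcal{A}^n\mu(U)=\mu(\mathcal{A}^{-n}(U))$.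 A word $u$ is persistent for $(\mathcal{A},\mu)$ if $\mathcal{A}^n\mu([u]_0)$ does not tend to $0$ as $n\to\infty$; $L_\mu(\mathcal{A})$ is the set of persistent words. For sets of words $X,Y$, $X\cdot Y$ denotes concatenation and $Q^m$ the set of words of length $m$. *)

From HB Require Import structures.
From mathcomp Require Import all_boot all_order all_algebra.
From mathcomp Require Import all_classical all_reals all_analysis.
Set Implicit Arguments. Unset Strict Implicit. Unset Printing Implicit Defensive.
Import Order.TTheory GRing.Theory Num.Theory.
Import numFieldNormedType.Exports.
Local Open Scope ring_scope.
Local Open Scope classical_set_scope.

Definition local_rule (Q : finType) (r : nat) := (2 * r).+1.-tuple Q -> Q.

(* Image of a word v of length m under the local rule: the word of length
   m - 2r obtained by applying delta to each window of length 2r+1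
   (the empty word when m <= 2r). *)
Definition local_image (Q : finType) (r : nat) (delta : local_rule Q r)
  (v : seq Q) : seq Q :=
  match v with
  | [::] => [::]
  | x0 :: _ =>
      [seq delta [tuple nth x0 v (i + j) | j < (2 * r).+1]
        | i <- iota 0 (size v - 2 * r)%N]
  end.

Definition in_preimage (Q : finType) (r : nat) (delta : local_rule Q r)
  (n : nat) (u v : seq Q) : Prop :=
  size v = (size u + 2 * r * n)%N /\ iter n (local_image delta) v = u.

Definition bernoulli_cyl (R : realType) (Q : finType) (p : Q -> R)
  (v : seq Q) : R := \prod_(a : Q) p a ^+ count_mem a v.

Definition complete_bernoulli (R : realType) (Q : finType) (p : Q -> R) : Prop :=
  (forall a, 0 < p a) /\ \sum_(a : Q) p a = 1.

(* A^n mu([u]_0) = mu(A^{-n}([u]_0)); A^{-n}([u]_0) is the disjoint union of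
   the cylinders [v]_{-rn}, v \in A^{-n}(u). *)
Definition pushforward_cyl (R : realType) (Q : finType) (r : nat)
  (delta : local_rule Q r) (p : Q -> R) (n : nat) (u : seq Q) : R :=
  \sum_(v : (size u + 2 * r * n).-tuple Q |
          iter n (local_image delta) (tval v) == u) bernoulli_cyl p v.

Definition persistent (R : realType) (Q : finType) (r : nat)
  (delta : local_rule Q r) (p : Q -> R) (u : seq Q) : Prop :=
  ~ (pushforward_cyl delta p n u @[n --> \oo] --> (0 : R)).

Definition in_pattern (Q : finType) (l1 l2 l3 : nat) (w v : seq Q) : Prop :=
  exists a b c : seq Q,
    [/\ size a = l1, size b = l2, size c = l3 & v = a ++ w ++ b ++ w ++ c].

From HB Require Import structures.
From mathcomp Require Import all_boot all_order all_algebra.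
From mathcomp Require Import all_classical all_reals all_analysis.
From mathcomp Require Import zify ring lra.
Set Implicit Arguments. Unset Strict Implicit. Unset Printing Implicit Defensive.
Import Order.TTheory GRing.Theory Num.Theory.
Import numFieldNormedType.Exports.
Local Open Scope ring_scope.
Local Open Scope classical_set_scope.

(* For large [n] a preimage of [u] has length [|u| + 2rn] and its central part
   maps onto [u]; the preimages carry mass at least [eps > 0] infinitely often.
   Under the Bernoulli measure, the words avoiding [w] in each of [m] disjoint
   blocks of a fixed window have mass [(1 - mu(w))^m], so for [m] large a
   preimage must contain [w] in the window just left of the centre and in the
   window just right of it.  The positions of these occurrences range over a
   finite set, so one pair of gaps [(k1, k2)] recurs for infinitely many [n]. *)

Section WordSums.
Variable Q : finType.

Fixpoint wsum (R : nmodType) (n : nat) (F : seq Q -> R) : R :=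
  if n is n'.+1 then \sum_(a : Q) wsum n' (fun s => F (a :: s)) else F [::].

Lemma eq_wsum (R : nmodType) n (F G : seq Q -> R) :
  (forall s, size s = n -> F s = G s) -> wsum n F = wsum n G.
Proof.
elim: n F G => [|n IH] F G FG /=; first exact: FG.
by apply: eq_bigr => a _; apply: IH => s sz; apply: FG; rewrite /= sz.
Qed.

Lemma ler_wsum (R : numDomainType) n (F G : seq Q -> R) :
  (forall s, size s = n -> F s <= G s) -> wsum n F <= wsum n G.
Proof.
elim: n F G => [|n IH] F G FG /=; first exact: FG.
by apply: ler_sum => a _; apply: IH => s sz; apply: FG; rewrite /= sz.
Qed.

Lemma wsum0 (R : nmodType) n : wsum n (fun _ => 0 : R) = 0.
Proof. by elim: n => [|n IH] //=; apply: big1. Qed.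

Lemma wsumD (R : nmodType) n (F G : seq Q -> R) :
  wsum n (fun s => F s + G s) = wsum n F + wsum n G.
Proof.
elim: n F G => [|n IH] F G //=.
by rewrite -big_split; apply: eq_bigr => a _; apply: IH.
Qed.

Lemma wsumB (R : zmodType) n (F G : seq Q -> R) :
  wsum n (fun s => F s - G s) = wsum n F - wsum n G.
Proof.
apply/eqP; rewrite eq_sym subr_eq -wsumD; apply/eqP.
by apply: eq_wsum => s _; rewrite subrK.
Qed.

Lemma mulr_wsumr (R : pzSemiRingType) n (F : seq Q -> R) k :
  k * wsum n F = wsum n (fun s => k * F s).
Proof.
elim: n F => [|n IH] F //=.
by rewrite mulr_sumr; apply: eq_bigr => a _; apply: IH.
Qed.

Lemma mulr_wsuml (R : pzSemiRingType) n (F : seq Q -> R) k :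
  wsum n F * k = wsum n (fun s => F s * k).
Proof.
elim: n F => [|n IH] F //=.
by rewrite mulr_suml; apply: eq_bigr => a _; apply: IH.
Qed.

Lemma wsum_cat (R : nmodType) m n (F : seq Q -> R) :
  wsum (m + n) F = wsum m (fun x => wsum n (fun y => F (x ++ y))).
Proof.
elim: m F => [|m IH] F //=.
by apply: eq_bigr => a _; apply: IH.
Qed.

Lemma wsum_pred1 (R : pzSemiRingType) (w : seq Q) (G : seq Q -> R) :
  wsum (size w) (fun x => (x == w)%:R * G x) = G w.
Proof.
elim: w G => [|a w IH] G /=; first by rewrite mul1r.
rewrite (bigD1 a) //= big1 ?addr0.
  rewrite -(IH (fun x => G (a :: x))); apply: eq_wsum => s _.
  by rewrite eqseq_cons eqxx.
move=> b /negbTE ba; rewrite -(wsum0 R (size w)); apply: eq_wsum => s _.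
by rewrite eqseq_cons ba mul0r.
Qed.

Lemma sum_tuple_wsum (R : nmodType) n (G : seq Q -> R) :
  \sum_(t : n.-tuple Q) G t = wsum n G.
Proof.
elim: n G => [|n IH] G /=.
  by rewrite (big_pred1 [tuple]) // => t; rewrite [t]tuple0; apply/esym/eqP.
rewrite (reindex (fun x : Q * n.-tuple Q => [tuple of x.1 :: x.2])) /=; last first.
  exists (fun t : n.+1.-tuple Q => (thead t, [tuple of behead t])).
    by case=> a t _ /=; congr pair; apply: val_inj.
  by move=> t _; apply: val_inj => /=; rewrite [in RHS](tuple_eta t).
rewrite -(pair_bigA _ (fun a (t : n.-tuple Q) => G (a :: t))) /=.
by apply: eq_bigr => a _; apply: IH.
Qed.

End WordSums.

Section Occurrences.
Variable Q : finType.
Implicit Types w v L : seq Q.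

Definition occurs_at w v k : bool := take (size w) (drop k v) == w.

(* Occurrences in disjoint blocks are independent events; the spare letter of each
   block keeps the gaps produced below positive. *)
Definition occurs_in_blocks w m L : bool :=
  has (fun i => occurs_at w L (i * (size w).+1)) (iota 0 m).

Lemma occurs_in_blocks_cat w m B L :
  size B = (size w).+1 ->
  occurs_in_blocks w m.+1 (B ++ L) = occurs_at w B 0 || occurs_in_blocks w m L.
Proof.
move=> szB; rewrite /occurs_in_blocks /occurs_at /= mul0n !drop0 takel_cat ?szB //.
congr orb; rewrite -[1%N]addn0 iotaDl has_map; apply: eq_has => i /=.
by rewrite mulSn drop_cat szB ltnNge leq_addr /= addnC addnK.
Qed.

Lemma occurs_in_window w v m o :
  occurs_in_blocks w m (take (m * (size w).+1) (drop o v)) ->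
  exists2 i, (i < m)%N & occurs_at w v (o + i * (size w).+1).
Proof.
move=> /hasP [i]; rewrite mem_iota add0n => /andP [_ lt_im] /eqP occ.
exists i => //; rewrite /occurs_at -[X in _ == X]occ; apply/eqP.
have : (i.+1 * (size w).+1 <= m * (size w).+1)%N by rewrite leq_mul2r lt_im orbT.
rewrite mulSn => le_block.
by rewrite [RHS]take_drop take_takel -?take_drop ?drop_drop 1?addnC //; lia.
Qed.

Lemma in_pattern_occurs w v k1 k2 :
  occurs_at w v k1 -> occurs_at w v k2 ->
  (k1 + size w <= k2)%N -> (k2 + size w <= size v)%N ->
  in_pattern k1 (k2 - k1 - size w) (size v - k2 - size w) w v.
Proof.
move=> /eqP occ1 /eqP occ2 le12 le2v.
exists (take k1 v), (take (k2 - k1 - size w) (drop (k1 + size w) v)),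
  (drop (k2 + size w) v); split.
- by rewrite size_take; case: ifP => //; lia.
- by rewrite size_take size_drop; case: ifP => //; lia.
- by rewrite size_drop; lia.
rewrite -{1}(cat_take_drop k1 v); congr (_ ++ _).
rewrite -{1}(cat_take_drop (size w) (drop k1 v)) occ1 drop_drop; congr (_ ++ _).
rewrite -{1}(cat_take_drop (k2 - k1 - size w) (drop (size w + k1) v)) addnC.
congr (_ ++ _); rewrite drop_drop (_ : (k2 - k1 - size w + (k1 + size w) = k2)%N); last by lia.
by rewrite -{1}(cat_take_drop (size w) (drop k2 v)) occ2 drop_drop addnC.
Qed.

Lemma in_pattern_around w v h l k1 k2 :
  size v = (h + l + h)%N -> (k1 + size w <= h)%N -> (k2 + size w <= h)%N ->
  occurs_at w v (h - k1 - size w) -> occurs_at w v (h + l + k2) ->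
  in_pattern (h - k1 - size w) (k1 + k2 + l) (h - k2 - size w) w v.
Proof.
move=> szv le1 le2 occ1 occ2.
have := in_pattern_occurs occ1 occ2; rewrite szv.
have -> : (h + l + k2 - (h - k1 - size w) - size w = k1 + k2 + l)%N by lia.
have -> : (h + l + h - (h + l + k2) - size w = h - k2 - size w)%N by lia.
by apply; lia.
Qed.

End Occurrences.

Section BernoulliWords.
Variables (R : realType) (Q : finType) (p : Q -> R).
Hypotheses (p_gt0 : forall a, 0 < p a) (p_sum1 : \sum_(a : Q) p a = 1).
Local Notation mu := (bernoulli_cyl p).

Lemma bernoulli_cyl_nil : mu [::] = 1.
Proof. by rewrite /bernoulli_cyl big1. Qed.

Lemma bernoulli_cyl_cat x y : mu (x ++ y) = mu x * mu y.
Proof.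
by rewrite /bernoulli_cyl -big_split; apply: eq_bigr => a _; rewrite count_cat exprD.
Qed.

Lemma bernoulli_cyl_cons a s : mu (a :: s) = p a * mu s.
Proof.
rewrite -cat1s bernoulli_cyl_cat; congr (_ * _).
rewrite /bernoulli_cyl (bigD1 a) //= eqxx expr1 big1 ?mulr1 // => b /negbTE.
by rewrite eq_sym => ->; rewrite expr0.
Qed.

Lemma bernoulli_cyl_gt0 s : 0 < mu s.
Proof. by apply: prodr_gt0 => a _; apply: exprn_gt0. Qed.

Lemma bernoulli_cyl_ge0 s : 0 <= mu s.
Proof. exact/ltW/bernoulli_cyl_gt0. Qed.

Lemma wsum_bernoulli_cyl n : wsum n mu = 1.
Proof.
elim: n => [|n IH] /=; first exact: bernoulli_cyl_nil.
rewrite -[RHS]p_sum1; apply: eq_bigr => a _.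
under eq_wsum do rewrite bernoulli_cyl_cons.
by rewrite -mulr_wsumr IH mulr1.
Qed.

Lemma bernoulli_cyl_le1 s : mu s <= 1.
Proof.
rewrite -(wsum_pred1 s mu) -[leRHS](wsum_bernoulli_cyl (size s)).
apply: ler_wsum => x _.
by case: (x == s); rewrite ?mul1r ?mul0r ?bernoulli_cyl_ge0.
Qed.

(* The letters outside a window are integrated out, each contributing total mass 1. *)
Lemma wsum_window N o M (G : seq Q -> R) : (o + M <= N)%N ->
  wsum N (fun v => G (take M (drop o v)) * mu v) = wsum M (fun L => G L * mu L).
Proof.
move=> le_oMN; rewrite -(subnKC le_oMN) wsum_cat.
under eq_wsum => x szx.
  under eq_wsum => y _ do rewrite take_drop addnC -szx take_size_cat //
    bernoulli_cyl_cat mulrA.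
  rewrite -mulr_wsumr wsum_bernoulli_cyl mulr1.
  over.
rewrite wsum_cat.
under eq_wsum => x szx.
  under eq_wsum => y _ do rewrite drop_size_cat // bernoulli_cyl_cat mulrCA.
  rewrite -mulr_wsumr.
  over.
by rewrite -mulr_wsuml wsum_bernoulli_cyl mul1r.
Qed.

Lemma wsum_not_occurs_in_blocks (w : seq Q) m :
  wsum (m * (size w).+1) (fun L => (~~ occurs_in_blocks w m L)%:R * mu L)
  = (1 - mu w) ^+ m.
Proof.
elim: m => [|m IH].
  by rewrite mul0n /= /occurs_in_blocks /= mul1r bernoulli_cyl_nil expr0.
have miss_block : wsum (size w).+1 (fun B => (~~ occurs_at w B 0)%:R * mu B) = 1 - mu w.
  rewrite (eq_wsum (G := fun B => mu B - (occurs_at w B 0)%:R * mu B)); last first.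
    by move=> B _; case: (occurs_at _ _ _) => /=; ring.
  rewrite wsumB wsum_bernoulli_cyl -(wsum_pred1 w mu) -addn1 wsum_cat.
  congr (_ - _); apply: eq_wsum => x szx.
  under eq_wsum => y _ do rewrite /occurs_at drop0 takel_cat ?szx // -szx take_size
    bernoulli_cyl_cat mulrA.
  by rewrite -mulr_wsumr wsum_bernoulli_cyl mulr1.
rewrite mulSn wsum_cat exprS -IH -miss_block mulr_wsuml; apply: eq_wsum => B szB.
rewrite mulr_wsumr; apply: eq_wsum => L _.
rewrite occurs_in_blocks_cat // negb_or bernoulli_cyl_cat.
by case: (occurs_at _ _ _); case: (occurs_in_blocks _ _ _) => /=; ring.
Qed.

Lemma exists_occurs_in_two_windows (S : pred (seq Q)) (w : seq Q) m N o1 o2 :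
  (o1 + m * (size w).+1 <= N)%N -> (o2 + m * (size w).+1 <= N)%N ->
  2 * (1 - mu w) ^+ m < wsum N (fun v => (S v)%:R * mu v) ->
  exists v, [/\ size v = N, S v,
    occurs_in_blocks w m (take (m * (size w).+1) (drop o1 v)) &
    occurs_in_blocks w m (take (m * (size w).+1) (drop o2 v))].
Proof.
set M := (m * (size w).+1)%N => le1 le2; apply: contraPP => none.
have miss o : (o + M <= N)%N -> (1 - mu w) ^+ m
    = wsum N (fun v => (~~ occurs_in_blocks w m (take M (drop o v)))%:R * mu v).
  move=> le_oMN; rewrite (wsum_window (fun L => (~~ occurs_in_blocks w m L)%:R)) //.
  exact/esym/wsum_not_occurs_in_blocks.
apply/negP; rewrite -leNgt mulr_natl mulr2n {1}(miss _ le1) (miss _ le2) -wsumD.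
apply: ler_wsum => v szv.
have := bernoulli_cyl_ge0 v.
case Sv: (S v); case occ1: (occurs_in_blocks _ _ (take M (drop o1 v)));
  case occ2: (occurs_in_blocks _ _ (take M (drop o2 v))) => /=; try lra.
by case: none; exists v.
Qed.

End BernoulliWords.

Lemma infinitely_often_pigeonhole (I : finType) (P : nat -> I -> Prop) :
  (forall N, exists n, (N <= n)%N /\ exists i, P n i) ->
  exists i, forall N, exists n, (N <= n)%N /\ P n i.
Proof.
move=> often; apply: contrapT => none.
suff /choice[bound boundP] : forall i, exists N, forall n, (N <= n)%N -> ~ P n i.
  have [n [le_n [i Pni]]] := often (\max_i bound i).
  by apply: (boundP i n) => //; apply: leq_trans le_n; apply: leq_bigmax.
move=> i; apply: contrapT => /forallNP not_eventually; apply: none; exists i => N.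
by have /existsNP[n /not_implyP[le_Nn /contrapT Pni]] := not_eventually N; exists n.
Qed.

Lemma infinitely_often_subseq (P : nat -> Prop) :
  (forall N, exists n, (N <= n)%N /\ P n) ->
  exists ns : nat -> nat,
    [/\ forall j, (0 < ns j)%N, forall j, (ns j < ns j.+1)%N & forall j, P (ns j)].
Proof.
move=> /choice[next nextP].
have [ge_next P_next] := (fun n => proj1 (nextP n), fun n => proj2 (nextP n)).
pose ns := fix ns j := if j is j'.+1 then next (ns j').+1 else next 1%N.
by exists ns; split=> [[|j]|j|[|j]] /=; by [apply: leq_trans (ge_next _) | apply: P_next].
Qed.

Lemma exists_small_expr (R : realType) (z e : R) :
  0 <= z < 1 -> 0 < e -> exists m, z ^+ m < e.
Proof.
move=> /andP[z_ge0 z_lt1] e_gt0.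
have /cvgr0_norm_lt/(_ e e_gt0) [N _ small] : (GRing.exp z : R ^nat) @ \oo --> 0.
  by apply: cvg_expr; rewrite ger0_norm.
by exists N; have := small N (leqnn N); rewrite /= ger0_norm ?exprn_ge0.
Qed.

Section PersistentPreimages.
Variables (R : realType) (Q : finType) (r : nat) (delta : local_rule Q r) (p : Q -> R).
Hypotheses (p_gt0 : forall a, 0 < p a) (p_sum1 : \sum_(a : Q) p a = 1).

Lemma pushforward_cyl_wsum n u : pushforward_cyl delta p n u =
  wsum (size u + 2 * r * n) (fun v => (iter n (local_image delta) v == u)%:R * bernoulli_cyl p v).
Proof.
rewrite /pushforward_cyl big_mkcond /= -sum_tuple_wsum; apply: eq_bigr => t _.
by case: ifP; rewrite ?mul1r ?mul0r.
Qed.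

Lemma persistent_often_ge u : persistent delta p u ->
  exists2 eps : R, 0 < eps & forall N, exists n, (N <= n)%N /\ eps <= pushforward_cyl delta p n u.
Proof.
move=> persist_u; apply: contrapT => none; apply: persist_u.
apply/cvgr0Pnorm_lt => e e_gt0.
have /existsNP[N rarely_ge] :
    ~ forall N, exists n, (N <= n)%N /\ e <= pushforward_cyl delta p n u.
  by move=> often; apply: none; exists e.
exists N => // n /= le_Nn; rewrite ger0_norm; last first.
  by apply: sumr_ge0 => t _; apply: bernoulli_cyl_ge0.
by rewrite ltNge; apply/negP => le_e; apply: rarely_ge; exists n.
Qed.

Definition block_gap (w : seq Q) (i : nat) : nat := (i * (size w).+1).+1.

Lemma often_preimage_in_pattern (w u : seq Q) m eps : (0 < r)%N ->
  (forall N, exists n, (N <= n)%N /\ eps <= pushforward_cyl delta p n u) ->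
  2 * (1 - bernoulli_cyl p w) ^+ m < eps ->
  forall N, exists n, (N <= n)%N /\ exists ij : 'I_m * 'I_m, exists v,
    in_preimage delta n u v /\
    in_pattern (r * n - block_gap w ij.1 - size w) (block_gap w ij.1 + block_gap w ij.2 + size u)
               (r * n - block_gap w ij.2 - size w) w v.
Proof.
move=> r_gt0 often_ge small N; set d := (size w).+1; set M := (m * d)%N.
have [n [+ ge_eps]] := often_ge (maxn N M.+1); rewrite geq_max => /andP[le_Nn lt_Mn].
have lt_M_rn : (M < r * n)%N by apply: leq_trans lt_Mn _; rewrite leq_pmull.
have szN : (size u + 2 * r * n = r * n + size u + r * n)%N by rewrite -mulnA mul2n -addnn; lia.
have le_left : (r * n - M + M <= size u + 2 * r * n)%N by lia.
have le_right : (r * n + size u + 1 + M <= size u + 2 * r * n)%N by lia.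
have lt_eps : 2 * (1 - bernoulli_cyl p w) ^+ m
    < wsum (size u + 2 * r * n) (fun v => (iter n (local_image delta) v == u)%:R * bernoulli_cyl p v).
  by apply: lt_le_trans small _; rewrite -pushforward_cyl_wsum.
have [v [szv /eqP pre /occurs_in_window[i lt_im occ1] /occurs_in_window[j lt_jm occ2]]] :=
  exists_occurs_in_two_windows p_gt0 p_sum1 le_left le_right lt_eps.
(* Blocks of the left window are counted away from [u], hence [rev_ord]. *)
exists n; split => //; exists (rev_ord (Ordinal lt_im), Ordinal lt_jm), v; split => //.
have [le_iM le_jM] : (i.+1 * d <= M /\ j.+1 * d <= M)%N by rewrite !leq_mul2r lt_im lt_jm !orbT.
have gap_i : (block_gap w (m - i.+1) = M - i.+1 * d + 1)%N by rewrite /block_gap mulnBl addn1.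
move: le_iM le_jM occ1 occ2; rewrite /= gap_i /block_gap -/d !mulSn => le_iM le_jM occ1 occ2.
apply: in_pattern_around; rewrite ?szv //; try lia.
- by move: occ1; congr (occurs_at _ _ _); lia.
- by move: occ2; congr (occurs_at _ _ _); lia.
Qed.

End PersistentPreimages.

Theorem mainTheorem2 (R : realType) (Q : finType) (r : nat) (hr : (0 < r)%N)
  (delta : local_rule Q r) (p : Q -> R) (hp : complete_bernoulli p)
  (w u : seq Q) (hu : persistent delta p u) :
  exists (k1 k2 : nat) (ns : nat -> nat),
    [/\ (0 < k1)%N, (0 < k2)%N,
        (forall j, (0 < ns j)%N),
        (forall j, (ns j < ns j.+1)%N) &
        forall j, exists v : seq Q,
          in_preimage delta (ns j) u v /\
          in_pattern (r * ns j - k1 - size w)%N (k1 + k2 + size u)%N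
                     (r * ns j - k2 - size w)%N w v].
Proof.
have [p_gt0 p_sum1] := hp.
have [eps eps_gt0 often_ge] := persistent_often_ge p_gt0 hu.
have [m small] : exists m, (1 - bernoulli_cyl p w) ^+ m < eps / 2.
  apply: exists_small_expr; last by rewrite divr_gt0.
  by rewrite subr_ge0 bernoulli_cyl_le1 // ltrBlDr ltrDl bernoulli_cyl_gt0.
have small2 : 2 * (1 - bernoulli_cyl p w) ^+ m < eps by rewrite mulrC -ltr_pdivlMr.
have [[i j] often_ij] :=
  infinitely_often_pigeonhole (often_preimage_in_pattern p_gt0 p_sum1 hr often_ge small2).
have [ns [ns_gt0 ns_incr ns_pattern]] := infinitely_often_subseq often_ij.
by exists (block_gap w i), (block_gap w j), ns.
Qed.
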